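(* Let $f:[0,1]\to\mathbb{R}$ be a piecewise $C^1$, concave, non-negative function, let $a=\min\{\tau\in[0,1]: f(\tau)=\max_{[0,1]}f\}$, and assume $a>0$. Let $h>0$ and let $\gamma$ be the oriented curve $t\mapsto (y_1(t),y_2(t))=(1-t,\,f(1-t))$, $1-a\le t\le 1$ (running along the graph of $f$ from $(a,f(a))$ to $(0,f(0))$). Then for every $x_1\in[a/2,a]$, $$\int_\gamma\frac{y_1-x_1}{\left((y_1-x_1)^2+y_2^2+h^2\right)^{5/2}}\,dy_2>0,$$ equivalently $\int_0^a\frac{(t-x_1)f'(t)}{\left((t-x_1)^2+f(t)^2+h^2\right)^{5/2}}\,dt<0$. *)

From Stdlib Require Import Reals Lra.
Open Scope R_scope.

Definition concave_on01 (f : R -> R) : Prop :=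
  forall x y l, 0 <= x <= 1 -> 0 <= y <= 1 -> 0 <= l <= 1 ->
    l * f x + (1 - l) * f y <= f (l * x + (1 - l) * y).

(* f is piecewise C^1 on [0,1] with (almost-everywhere) derivative fp:
   there is a partition 0 = p 0 < p 1 < ... < p n = 1 such that on each
   closed piece [p i, p (i+1)] f is continuous, and on the open piece f is
   differentiable with derivative fp, which agrees there with a function g
   continuous on the closed piece (i.e. f' extends continuously to the
   closed piece, so f is C^1 on each closed piece). *)
Definition piecewise_C1_01 (f fp : R -> R) : Prop :=
  exists (n : nat) (p : nat -> R),
    p 0%nat = 0 /\ p n = 1 /\
    (forall i, (i < n)%nat -> p i < p (S i)) /\
    (forall i, (i < n)%nat ->
       (forall x, p i <= x <= p (S i) ->
          limit1_in f (fun y => p i <= y <= p (S i)) (f x) x) /\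
       (exists g : R -> R,
          (forall x, p i <= x <= p (S i) ->
             limit1_in g (fun y => p i <= y <= p (S i)) (g x) x) /\
          (forall x, p i < x < p (S i) ->
             derivable_pt_lim f x (fp x) /\ fp x = g x))).

Definition integrand (f fp : R -> R) (h x1 : R) (t : R) : R :=
  (t - x1) * fp t / Rpower ((t - x1) ^ 2 + (f t) ^ 2 + h ^ 2) (5 / 2).

From Stdlib Require Import Reals Lra Lia List ClassicalEpsilon.
Open Scope R_scope.

(* Since f is concave with first maximiser a, f' is positive and nonincreasing on (0, a) and
   f is strictly increasing there. On (0, 2 x1 - a) the factor t - x1 is negative, so the
   integrand is negative. The rest (2 x1 - a, a) is symmetric about x1; pairing x1 + s with
   x1 - s, the numerator at x1 + s is at most the one at x1 - s in absolute value (as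
   f'(x1 + s) <= f'(x1 - s)) while its denominator is larger (as f(x1 + s) > f(x1 - s)), so
   each pair contributes negatively. Because f' is only controlled off the finitely many break
   points, the integrals are compared through the antiderivative of the integrand: it is
   Lipschitz, differentiable off the break points, and the mean value theorem on the pieces
   turns negative derivatives into strict decrease. *)

Definition clamp (c d x : R) : R := Rmax c (Rmin d x).

Lemma clamp_in c d x : c <= d -> c <= clamp c d x <= d.
Proof. unfold clamp, Rmax, Rmin; intros; destruct (Rle_dec d x); destruct (Rle_dec c _); lra. Qed.

Lemma clamp_id c d x : c <= x <= d -> clamp c d x = x.
Proof. unfold clamp, Rmax, Rmin; intros; destruct (Rle_dec d x); destruct (Rle_dec c _); lra. Qed.

Lemma clamp_contract c d x y : c <= d -> x <= y -> 0 <= clamp c d y - clamp c d x <= y - x.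
Proof.
  unfold clamp, Rmax, Rmin; intros; destruct (Rle_dec d x); destruct (Rle_dec d y);
  repeat match goal with |- context [Rle_dec ?u ?v] => destruct (Rle_dec u v) end; lra.
Qed.

Lemma continuity_pt_clamp (u : R -> R) c d : c <= d ->
  (forall x, c <= x <= d -> limit1_in u (fun y => c <= y <= d) (u x) x) ->
  forall t, continuity_pt (fun y => u (clamp c d y)) t.
Proof.
  intros Hcd Hu t eps Heps.
  destruct (Hu (clamp c d t) (clamp_in c d t Hcd) eps Heps) as [alp [Halp Hclose]].
  exists alp; split; [exact Halp|]. intros y [_ Hy]. simpl in *. unfold R_dist in *.
  apply Hclose; split; [now apply clamp_in|].
  apply Rabs_def2 in Hy.
  destruct (Rle_dec t y) as [Hty|Hty];
    [pose proof (clamp_contract c d t y Hcd Hty)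
    | pose proof (clamp_contract c d y t Hcd ltac:(lra))];
    apply Rabs_def1; lra.
Qed.

Lemma continuity_pt_open_ext (u v : R -> R) c d t : c < t < d ->
  (forall y, c < y < d -> u y = v y) -> continuity_pt v t -> continuity_pt u t.
Proof.
  intros Ht Huv. apply continuity_pt_locally_ext with (Rmin (t - c) (d - t)).
  - apply Rmin_pos; lra.
  - intros y Hy. unfold Rdist in Hy. apply Rabs_def2 in Hy.
    pose proof (Rmin_l (t - c) (d - t)). pose proof (Rmin_r (t - c) (d - t)).
    symmetry; apply Huv; lra.
Qed.

Lemma continuity_pt_sqr (u : R -> R) t : continuity_pt u t -> continuity_pt (fun y => u y ^ 2) t.
Proof.
  intros Hu. apply (continuity_pt_comp u (fun z => z ^ 2)); [exact Hu|].
  apply derivable_continuous_pt, derivable_pt_pow.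
Qed.

Lemma zero_on_open_IsStepFun (u : R -> R) c d : c <= d ->
  (forall x, c < x < d -> u x = 0) -> IsStepFun u c d.
Proof.
  intros Hcd Hu. exists (c :: d :: nil), (0 :: nil).
  unfold adapted_couple; repeat split.
  - intros i Hi; simpl in Hi. destruct i; [simpl; lra | lia].
  - simpl; unfold Rmin; destruct (Rle_dec c d); lra.
  - simpl; unfold Rmax; destruct (Rle_dec c d); lra.
  - intros i Hi; simpl in Hi. destruct i; [|lia].
    unfold constant_D_eq, open_interval; simpl; intros; now apply Hu.
Qed.

Lemma Riemann_integrable_open_ext (u v : R -> R) c d : c <= d ->
  (forall x, c < x < d -> u x = v x) -> Riemann_integrable v c d -> Riemann_integrable u c d.
Proof.
  intros Hcd Huv Hv.
  assert (Hdiff : Riemann_integrable (fun x => u x - v x) c d).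
  { intros eps.
    exists (mkStepFun (zero_on_open_IsStepFun (fun x => u x - v x) c d Hcd
                         ltac:(intros x Hx; cbv beta; rewrite Huv by exact Hx; ring))).
    exists (mkStepFun (StepFun_P4 c d 0)). split.
    - intros; simpl; unfold fct_cte; rewrite Rminus_diag, Rabs_R0; lra.
    - rewrite StepFun_P18, Rmult_0_l, Rabs_R0. apply cond_pos. }
  apply Riemann_integrable_ext with (2 := RiemannInt_P10 1 Hv Hdiff). intros; ring.
Qed.

Definition partition_points (n : nat) (p : nat -> R) : list R := map p (seq 0 (S n)).

Definition piecewise_continuous (n : nat) (p : nat -> R) (phi : R -> R) : Prop :=
  forall i, (i < n)%nat -> exists psi : R -> R,
    (forall x, continuity_pt psi x) /\ (forall x, p i < x < p (S i) -> phi x = psi x).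

Section Partition.

Variables (n : nat) (p : nat -> R).

Lemma partition_piece t : p 0%nat < t < p n -> ~ In t (partition_points n p) ->
  exists i, (i < n)%nat /\ p i < t < p (S i).
Proof.
  intros Ht Hnot.
  assert (Hne : forall i, (i <= n)%nat -> t <> p i).
  { intros i Hi ->. apply Hnot, in_map, in_seq. lia. }
  assert (Hk : forall k, (k <= n)%nat -> t < p k -> exists i, (i < k)%nat /\ p i < t < p (S i)).
  { induction k as [|k IH]; intros Hk Htk; [lra|].
    destruct (Rlt_dec t (p k)) as [Hlt|Hge].
    - destruct (IH ltac:(lia) Hlt) as [i [Hi Hti]]. exists i; split; [lia | exact Hti].
    - exists k; split; [lia|]. specialize (Hne k ltac:(lia)). lra. }
  destruct (Hk n (le_n n) ltac:(lra)) as [i [Hi Hti]]. now exists i.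
Qed.

Variable phi : R -> R.
Hypothesis phi_pwc : piecewise_continuous n p phi.

Lemma piecewise_continuous_continuity_pt t : p 0%nat < t < p n ->
  ~ In t (partition_points n p) -> continuity_pt phi t.
Proof.
  intros Ht Hnot. destruct (partition_piece t Ht Hnot) as [i [Hi Hti]].
  destruct (phi_pwc i Hi) as [psi [Hpsi Heq]].
  exact (continuity_pt_open_ext phi psi _ _ t Hti Heq (Hpsi t)).
Qed.

Hypothesis p_incr : forall i, (i < n)%nat -> p i < p (S i).

Lemma piecewise_continuous_integrable : Riemann_integrable phi (p 0%nat) (p n).
Proof.
  assert (Hk : forall k, (k <= n)%nat -> Riemann_integrable phi (p 0%nat) (p k)).
  { induction k as [|k IH]; intros Hk; [apply RiemannInt_P7|].
    apply RiemannInt_P24 with (p k); [apply IH; lia|].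
    pose proof (p_incr k Hk) as Hpk.
    destruct (constructive_indefinite_description _ (phi_pwc k Hk)) as [psi [Hpsi Heq]].
    apply Riemann_integrable_open_ext with psi; [lra | exact Heq|].
    apply continuity_implies_RiemannInt; [lra | intros; apply Hpsi]. }
  exact (Hk n (le_n n)).
Qed.

Lemma piecewise_continuous_bounded :
  exists M, forall t, p 0%nat <= t <= p n -> Rabs (phi t) <= M.
Proof.
  assert (Hk : forall k, (k <= n)%nat ->
            exists M, forall t, p 0%nat <= t <= p k -> Rabs (phi t) <= M).
  { induction k as [|k IH]; intros Hk.
    - exists (Rabs (phi (p 0%nat))). intros t Ht. replace t with (p 0%nat) by lra. lra.
    - destruct (IH ltac:(lia)) as [M HM].
      pose proof (p_incr k Hk) as Hpk.
      destruct (phi_pwc k Hk) as [psi [Hpsi Heq]].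
      destruct (continuity_ab_maj (fun x => Rabs (psi x)) (p k) (p (S k)))
        as [xm [Hxm _]]; [lra | intros; apply (continuity_pt_comp psi Rabs);
                                [apply Hpsi | apply Rcontinuity_abs]|].
      exists (Rmax M (Rmax (Rabs (psi xm)) (Rabs (phi (p (S k)))))).
      pose proof (Rmax_l M (Rmax (Rabs (psi xm)) (Rabs (phi (p (S k)))))).
      pose proof (Rmax_r M (Rmax (Rabs (psi xm)) (Rabs (phi (p (S k)))))).
      pose proof (Rmax_l (Rabs (psi xm)) (Rabs (phi (p (S k))))).
      pose proof (Rmax_r (Rabs (psi xm)) (Rabs (phi (p (S k))))).
      intros t Ht. destruct (Rle_dec t (p k)) as [Htk|Htk].
      + pose proof (HM t ltac:(lra)). lra.
      + destruct (Req_dec t (p (S k))) as [->|Hne]; [lra|].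
        rewrite Heq by lra. pose proof (Hxm t ltac:(lra)). simpl in *. lra. }
  exact (Hk n (le_n n)).
Qed.

End Partition.

Lemma Rpower_gt_0 x y : 0 < Rpower x y.
Proof. apply exp_pos. Qed.

Lemma integrand_continuity_pt (f fp : R -> R) h x1 t : 0 < h ->
  continuity_pt f t -> continuity_pt fp t -> continuity_pt (integrand f fp h x1) t.
Proof.
  intros Hh Hf Hfp. unfold integrand.
  assert (Hshift : continuity_pt (fun t => t - x1) t).
  { apply (continuity_pt_minus id (fct_cte x1));
      [apply derivable_continuous_pt, derivable_pt_id | apply continuity_pt_const; now intros]. }
  apply (continuity_pt_div (fun t => (t - x1) * fp t)
           (fun t => Rpower ((t - x1) ^ 2 + f t ^ 2 + h ^ 2) (5 / 2))).
  - now apply (continuity_pt_mult (fun t => t - x1) fp).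
  - apply (continuity_pt_comp (fun t => (t - x1) ^ 2 + f t ^ 2 + h ^ 2)
                               (fun z => Rpower z (5 / 2))).
    + apply (continuity_pt_plus (fun t => (t - x1) ^ 2 + f t ^ 2) (fct_cte (h ^ 2)));
        [| apply continuity_pt_const; now intros].
      apply (continuity_pt_plus (fun t => (t - x1) ^ 2) (fun t => f t ^ 2));
        apply continuity_pt_sqr; assumption.
    + apply derivable_continuous_pt.
      exists (5 / 2 * Rpower ((t - x1) ^ 2 + f t ^ 2 + h ^ 2) (5 / 2 - 1)).
      apply derivable_pt_lim_power.
      pose proof (pow2_ge_0 (t - x1)). pose proof (pow2_ge_0 (f t)).
      pose proof (pow_lt h 2 Hh). lra.
  - apply Rgt_not_eq, Rpower_gt_0.
Qed.

Lemma piecewise_C1_01_integrand (f fp : R -> R) h x1 : 0 < h -> piecewise_C1_01 f fp ->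
  exists n p, p 0%nat = 0 /\ p n = 1 /\ (forall i, (i < n)%nat -> p i < p (S i)) /\
    piecewise_continuous n p (integrand f fp h x1) /\
    (forall t, 0 < t < 1 -> ~ In t (partition_points n p) -> derivable_pt_lim f t (fp t)).
Proof.
  intros Hh (n & p & Hp0 & Hpn & Hp_incr & Hpieces).
  exists n, p. do 3 (split; [assumption|]). split.
  - intros i Hi. destruct (Hpieces i Hi) as [Hf [g [Hg Hd]]].
    pose proof (Hp_incr i Hi).
    exists (integrand (fun y => f (clamp (p i) (p (S i)) y))
                      (fun y => g (clamp (p i) (p (S i)) y)) h x1). split.
    + intros x; apply integrand_continuity_pt; [exact Hh | |];
        apply continuity_pt_clamp; auto; lra.
    + intros x Hx. unfold integrand; cbv beta. rewrite clamp_id by lra.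
      now rewrite (proj2 (Hd x Hx)).
  - intros t Ht Hnot. rewrite <- Hp0, <- Hpn in Ht.
    destruct (partition_piece n p t Ht Hnot) as [i [Hi Hti]].
    destruct (Hpieces i Hi) as [_ [g [_ Hd]]]. exact (proj1 (Hd t Hti)).
Qed.

Lemma concave_on01_chord (f : R -> R) u w v : concave_on01 f ->
  0 <= u -> u < w -> w < v -> v <= 1 -> (v - w) * f u + (w - u) * f v <= (v - u) * f w.
Proof.
  intros Hc Hu Huw Hwv Hv.
  set (l := (v - w) / (v - u)).
  assert (Hl : 0 <= l <= 1).
  { unfold l; split; [apply Rmult_le_pos; [lra | left; apply Rinv_0_lt_compat; lra]|].
    apply Rmult_le_reg_r with (v - u); [lra|]. field_simplify; lra. }
  pose proof (Hc u v l ltac:(lra) ltac:(lra) Hl) as Hchord.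
  replace (l * u + (1 - l) * v) with w in Hchord by (unfold l; field; lra).
  apply Rmult_le_compat_l with (r := v - u) in Hchord; [|lra].
  replace ((v - u) * (l * f u + (1 - l) * f v)) with ((v - w) * f u + (w - u) * f v) in Hchord
    by (unfold l; field; lra).
  exact Hchord.
Qed.

(* The chord slope on [u, u + k] is at least the slope on [u, v], while for small k it is
   close to f'(u). *)
Lemma concave_on01_increment_le_deriv (f : R -> R) d u v : concave_on01 f ->
  derivable_pt_lim f u d -> 0 <= u -> u < v -> v <= 1 -> f v - f u <= d * (v - u).
Proof.
  intros Hc Hd Hu Huv Hv.
  destruct (Rle_dec (f v - f u) (d * (v - u))) as [|Hgt]; [assumption | exfalso].
  set (S := (f v - f u) / (v - u)).
  assert (HS : d < S) by (unfold S; apply Rmult_lt_reg_r with (v - u); [lra|]; field_simplify; lra).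
  destruct (Hd (S - d) ltac:(lra)) as [del Hdel].
  pose proof (cond_pos del).
  pose proof (Rmin_l (del / 2) ((v - u) / 2)). pose proof (Rmin_r (del / 2) ((v - u) / 2)).
  set (k := Rmin (del / 2) ((v - u) / 2)) in *.
  assert (Hk : 0 < k) by (apply Rmin_pos; lra).
  specialize (Hdel k ltac:(lra) ltac:(rewrite Rabs_right; lra)).
  apply Rabs_def2 in Hdel as [Hquot _].
  pose proof (concave_on01_chord f u (u + k) v Hc Hu ltac:(lra) ltac:(lra) Hv) as Hchord.
  assert (Hinc : f (u + k) - f u < S * k).
  { apply Rmult_lt_reg_r with (/ k); [apply Rinv_0_lt_compat; lra|].
    replace (S * k * / k) with S by (field; lra). unfold Rdiv in Hquot. lra. }
  unfold S in Hinc.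
  apply Rmult_lt_compat_r with (r := v - u) in Hinc; [|lra].
  replace ((f v - f u) / (v - u) * k * (v - u)) with ((f v - f u) * k) in Hinc by (field; lra).
  nra.
Qed.

Lemma concave_on01_reflect (f : R -> R) : concave_on01 f -> concave_on01 (fun x => f (1 - x)).
Proof.
  intros Hc x y l Hx Hy Hl.
  replace (1 - (l * x + (1 - l) * y)) with (l * (1 - x) + (1 - l) * (1 - y)) by ring.
  apply Hc; lra.
Qed.

Lemma concave_on01_deriv_le_increment (f : R -> R) d u v : concave_on01 f ->
  derivable_pt_lim f v d -> 0 <= u -> u < v -> v <= 1 -> d * (v - u) <= f v - f u.
Proof.
  intros Hc Hd Hu Huv Hv.
  assert (Hd' : derivable_pt_lim (fun x => f (1 - x)) (1 - v) (d * (0 - 1))).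
  { apply (derivable_pt_lim_comp (fun x => 1 - x) f).
    - apply (derivable_pt_lim_minus (fct_cte 1) id);
        [apply derivable_pt_lim_const | apply derivable_pt_lim_id].
    - now replace (1 - (1 - v)) with v by ring. }
  pose proof (concave_on01_increment_le_deriv _ _ (1 - v) (1 - u)
                (concave_on01_reflect f Hc) Hd' ltac:(lra) ltac:(lra) ltac:(lra)) as Hinc.
  simpl in Hinc. replace (1 - (1 - u)) with u in Hinc by ring.
  replace (1 - (1 - v)) with v in Hinc by ring. lra.
Qed.

Lemma concave_on01_deriv_antitone (f : R -> R) d1 d2 t1 t2 : concave_on01 f ->
  derivable_pt_lim f t1 d1 -> derivable_pt_lim f t2 d2 ->
  0 <= t1 -> t1 < t2 -> t2 <= 1 -> d2 <= d1.
Proof.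
  intros Hc H1 H2 Ht1 Ht12 Ht2.
  pose proof (concave_on01_increment_le_deriv f d1 t1 t2 Hc H1 Ht1 Ht12 Ht2).
  pose proof (concave_on01_deriv_le_increment f d2 t1 t2 Hc H2 Ht1 Ht12 Ht2).
  nra.
Qed.

Section FirstMaximiser.

Variables (f : R -> R) (a : R).
Hypothesis f_concave : concave_on01 f.
Hypothesis a_in01 : 0 <= a <= 1.
Hypothesis a_max : forall t, 0 <= t <= 1 -> f t <= f a.
Hypothesis a_first : forall t, 0 <= t <= 1 -> f t = f a -> a <= t.

Lemma first_maximiser_lt u : 0 <= u < a -> f u < f a.
Proof.
  intros Hu. destruct (a_max u ltac:(lra)) as [|Heq]; [assumption|].
  apply a_first in Heq; lra.
Qed.

Lemma first_maximiser_increasing u w : 0 <= u -> u < w -> w <= a -> f u < f w.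
Proof.
  intros Hu Huw Hw. pose proof (first_maximiser_lt u ltac:(lra)).
  destruct (Req_dec w a) as [->|Hne]; [assumption|].
  pose proof (concave_on01_chord f u w a f_concave Hu Huw ltac:(lra) ltac:(lra)). nra.
Qed.

Lemma first_maximiser_deriv_pos d t : derivable_pt_lim f t d -> 0 <= t < a -> 0 < d.
Proof.
  intros Hd Ht.
  pose proof (concave_on01_increment_le_deriv f d t a f_concave Hd
                ltac:(lra) ltac:(lra) ltac:(lra)).
  pose proof (first_maximiser_lt t Ht). nra.
Qed.

Lemma first_maximiser_reflect d1 d2 x s : derivable_pt_lim f (x - s) d1 ->
  derivable_pt_lim f (x + s) d2 -> 0 < s -> 0 <= x - s -> x + s < a ->
  0 < d2 <= d1 /\ f (x - s) < f (x + s).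
Proof.
  intros H1 H2 Hs Hl Hr. split; [split|].
  - apply (first_maximiser_deriv_pos d2 (x + s) H2); lra.
  - apply (concave_on01_deriv_antitone f d1 d2 (x - s) (x + s)); auto; lra.
  - apply first_maximiser_increasing; lra.
Qed.

End FirstMaximiser.

Lemma integrand_neg (f fp : R -> R) h x1 t : t < x1 -> 0 < fp t -> integrand f fp h x1 t < 0.
Proof.
  intros Ht Hfp. unfold integrand, Rdiv.
  pose proof (Rinv_0_lt_compat _ (Rpower_gt_0 ((t - x1) ^ 2 + f t ^ 2 + h ^ 2) (5 / 2))).
  assert ((t - x1) * fp t < 0) by nra. nra.
Qed.

Lemma integrand_reflect_sum_neg (f fp : R -> R) h x1 s : 0 < h -> 0 < s ->
  0 < fp (x1 + s) <= fp (x1 - s) -> 0 <= f (x1 - s) < f (x1 + s) ->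
  integrand f fp h x1 (x1 + s) + integrand f fp h x1 (x1 - s) < 0.
Proof.
  intros Hh Hs Hfp Hf. unfold integrand.
  replace (x1 + s - x1) with s by ring. replace (x1 - s - x1) with (- s) by ring.
  set (F1 := (- s) ^ 2 + f (x1 - s) ^ 2 + h ^ 2).
  set (F2 := s ^ 2 + f (x1 + s) ^ 2 + h ^ 2).
  assert (HF1 : 0 < F1) by (unfold F1; pose proof (pow_lt h 2 Hh); nra).
  assert (HF12 : F1 < F2) by (unfold F1, F2; simpl; nra).
  pose proof (Rlt_Rpower_l F1 F2 (5 / 2) ltac:(lra) (conj HF1 HF12)) as Hpow.
  pose proof (Rpower_gt_0 F1 (5 / 2)) as HD1.
  assert (Hinv : / Rpower F2 (5 / 2) < / Rpower F1 (5 / 2)) by (apply Rinv_lt_contravar; nra).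
  assert (Hinv2 : 0 < / Rpower F2 (5 / 2)) by (apply Rinv_0_lt_compat; lra).
  unfold Rdiv.
  assert (s * fp (x1 + s) * / Rpower F2 (5 / 2) < s * fp (x1 + s) * / Rpower F1 (5 / 2))
    by (apply Rmult_lt_compat_l; nra).
  assert (s * fp (x1 + s) * / Rpower F1 (5 / 2) <= s * fp (x1 - s) * / Rpower F1 (5 / 2))
    by (apply Rmult_le_compat_r; nra).
  lra.
Qed.

Lemma RiemannInt_eq_bounds (phi : R -> R) a b c (pr1 : Riemann_integrable phi a b)
  (pr2 : Riemann_integrable phi a c) : b = c -> RiemannInt pr1 = RiemannInt pr2.
Proof. intros ->. apply RiemannInt_P5. Qed.

Section Primitive.

Variables (phi : R -> R) (a : R).
Hypothesis a_ge0 : 0 <= a.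
Variable pr : Riemann_integrable phi 0 a.

(* Constant outside [0, a], which makes it continuous on all of [R]. *)
Definition Prim (x : R) : R := RiemannInt (RiemannInt_P22 pr (clamp_in 0 a x a_ge0)).

Lemma Prim_sub x y (prxy : Riemann_integrable phi x y) :
  0 <= x -> x <= y -> y <= a -> Prim y - Prim x = RiemannInt prxy.
Proof.
  intros Hx Hxy Hy. unfold Prim.
  assert (pr0x : Riemann_integrable phi 0 x) by (apply RiemannInt_P22 with a; auto; lra).
  assert (pr0y : Riemann_integrable phi 0 y) by (apply RiemannInt_P22 with a; auto; lra).
  rewrite (RiemannInt_eq_bounds _ _ _ _ _ pr0x (clamp_id 0 a x ltac:(lra))).
  rewrite (RiemannInt_eq_bounds _ _ _ _ _ pr0y (clamp_id 0 a y ltac:(lra))).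
  rewrite <- (RiemannInt_P25 pr0x prxy pr0y) by assumption. ring.
Qed.

Lemma Prim_clamp x : Prim x = Prim (clamp 0 a x).
Proof.
  unfold Prim. apply RiemannInt_eq_bounds. symmetry. apply clamp_id, clamp_in, a_ge0.
Qed.

Lemma Prim_RiemannInt : RiemannInt pr = Prim a - Prim 0.
Proof. symmetry; apply Prim_sub; lra. Qed.

Lemma Prim_increment_bound x y c e : 0 <= x -> x <= y -> y <= a ->
  (forall t, x < t < y -> c - e <= phi t <= c + e) ->
  Rabs (Prim y - Prim x - c * (y - x)) <= e * (y - x).
Proof.
  intros Hx Hxy Hy Hclose.
  assert (prxy : Riemann_integrable phi x y).
  { apply RiemannInt_P23 with 0; [apply RiemannInt_P22 with a; [exact pr|] |]; lra. }
  rewrite (Prim_sub x y prxy Hx Hxy Hy).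
  destruct (RiemannInt_const_bound prxy Hxy Hclose).
  apply Rabs_le. split; nra.
Qed.

Lemma Prim_lipschitz M : (forall t, 0 < t < a -> Rabs (phi t) <= M) ->
  forall x y, x <= y -> Rabs (Prim y - Prim x) <= Rabs M * (y - x).
Proof.
  intros HM x y Hxy. rewrite (Prim_clamp x), (Prim_clamp y).
  destruct (clamp_in 0 a x a_ge0), (clamp_in 0 a y a_ge0).
  pose proof (clamp_contract 0 a x y a_ge0 Hxy).
  assert (Hb : Rabs (Prim (clamp 0 a y) - Prim (clamp 0 a x) - 0 * (clamp 0 a y - clamp 0 a x))
               <= Rabs M * (clamp 0 a y - clamp 0 a x)).
  { apply Prim_increment_bound; try lra. intros t Ht.
    pose proof (HM t ltac:(lra)). pose proof (Rle_abs (phi t)). pose proof (Rle_abs (- phi t)).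
    pose proof (Rle_abs M). rewrite Rabs_Ropp in *. lra. }
  rewrite Rmult_0_l, Rminus_0_r in Hb. pose proof (Rabs_pos M). nra.
Qed.

Lemma Prim_continuity_pt M : (forall t, 0 < t < a -> Rabs (phi t) <= M) ->
  forall x, continuity_pt Prim x.
Proof.
  intros HM. pose proof (Prim_lipschitz M HM) as Hlip.
  intros x eps Heps. pose proof (Rabs_pos M).
  exists (eps / (Rabs M + 1)). split; [apply Rdiv_lt_0_compat; lra|].
  intros y [_ Hy]. simpl in *. unfold R_dist in *.
  assert (Hd : Rabs (y - x) * (Rabs M + 1) < eps).
  { apply Rmult_lt_reg_r with (/ (Rabs M + 1)); [apply Rinv_0_lt_compat; lra|].
    replace (Rabs (y - x) * (Rabs M + 1) * / (Rabs M + 1)) with (Rabs (y - x)) by (field; lra).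
    exact Hy. }
  destruct (Rle_dec x y) as [Hxy|Hxy].
  - pose proof (Hlip x y Hxy). rewrite Rabs_right in Hd by lra. nra.
  - pose proof (Hlip y x ltac:(lra)). rewrite Rabs_minus_sym.
    rewrite Rabs_left in Hd by lra. nra.
Qed.

Lemma Prim_derivable x : 0 < x < a -> continuity_pt phi x -> derivable_pt_lim Prim x (phi x).
Proof.
  intros Hx Hc eps Heps.
  destruct (Hc (eps / 2) ltac:(lra)) as [alp [Halp Hclose]].
  assert (Hnear : forall t, Rabs (t - x) < alp -> phi x - eps / 2 <= phi t <= phi x + eps / 2).
  { intros t Ht. destruct (Req_dec t x) as [->|Hne]; [lra|].
    assert (Hd : Rabs (phi t - phi x) < eps / 2)
      by (apply Hclose; split; [split; [exact I | congruence] | exact Ht]).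
    apply Rabs_def2 in Hd. lra. }
  pose proof (Rmin_l alp (Rmin x (a - x))). pose proof (Rmin_r alp (Rmin x (a - x))).
  pose proof (Rmin_l x (a - x)). pose proof (Rmin_r x (a - x)).
  assert (Hdel : 0 < Rmin alp (Rmin x (a - x))) by (repeat apply Rmin_pos; lra).
  exists (mkposreal _ Hdel). intros h Hh0 Hh. simpl in Hh.
  assert (Hinc : Rabs (Prim (x + h) - Prim x - phi x * h) <= eps / 2 * Rabs h).
  { destruct (Rle_dec 0 h) as [Hpos|Hneg].
    - rewrite (Rabs_right h) in Hh |- * by lra.
      replace h with (x + h - x) at 2 3 by ring.
      apply Prim_increment_bound; try lra.
      intros t Ht. apply Hnear. rewrite Rabs_right; lra.
    - rewrite (Rabs_left h) in Hh |- * by lra.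
      replace (Prim (x + h) - Prim x - phi x * h)
        with (- (Prim x - Prim (x + h) - phi x * (x - (x + h)))) by ring.
      rewrite Rabs_Ropp. replace (- h) with (x - (x + h)) by ring.
      apply Prim_increment_bound; try lra.
      intros t Ht. apply Hnear. rewrite Rabs_left; lra. }
  replace ((Prim (x + h) - Prim x) / h - phi x)
    with ((Prim (x + h) - Prim x - phi x * h) / h) by (field; exact Hh0).
  pose proof (Rabs_pos_lt h Hh0).
  unfold Rdiv. rewrite Rabs_mult, Rabs_inv.
  apply Rle_lt_trans with (eps / 2 * Rabs h * / Rabs h).
  - apply Rmult_le_compat_r; [left; apply Rinv_0_lt_compat|]; assumption.
  - field_simplify; lra.
Qed.

End Primitive.

(* Induction on the exceptional list: an exceptional point inside (c, d) splits the interval,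
   and without exceptions the mean value theorem applies. *)
Lemma deriv_neg_off_finite_lt (G D : R -> R) (L : list R) c d : c < d ->
  (forall s, c <= s <= d -> continuity_pt G s) ->
  (forall s, c < s < d -> ~ In s L -> derivable_pt_lim G s (D s) /\ D s < 0) -> G d < G c.
Proof.
  revert c d. induction L as [|q L IH]; intros c d Hcd Hc Hd.
  - assert (prG : forall s, c < s < d -> derivable_pt G s)
      by (intros s Hs; exists (D s); exact (proj1 (Hd s Hs (in_nil (a := s))))).
    assert (prid : forall s, c < s < d -> derivable_pt id s) by (intros; apply derivable_pt_id).
    destruct (MVT G id c d prG prid Hcd Hc) as [xi [Hxi Heq]].
    { intros; apply derivable_continuous_pt, derivable_pt_id. }
    destruct (Hd xi Hxi (in_nil (a := xi))) as [HdG Hneg].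
    rewrite (derive_pt_eq_0 _ _ _ _ HdG), (derive_pt_eq_0 _ _ _ _ (derivable_pt_lim_id xi)) in Heq.
    unfold id in Heq. nra.
  - assert (Hd' : forall c' d', c <= c' -> d' <= d -> q <= c' \/ d' <= q ->
              forall s, c' < s < d' -> ~ In s L -> derivable_pt_lim G s (D s) /\ D s < 0).
    { intros c' d' Hc' Hd' Hq s Hs Hn. apply Hd; [lra|]. intros [->|Hin]; [lra | contradiction]. }
    destruct (Rlt_dec c q) as [Hcq|Hcq]; [destruct (Rlt_dec q d) as [Hqd|Hqd]|].
    + apply Rlt_trans with (G q); apply IH; try lra;
        try (intros; apply Hc; lra); apply Hd'; lra.
    + apply IH; [lra | exact Hc | apply Hd'; lra].
    + apply IH; [lra | exact Hc | apply Hd'; lra].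
Qed.

Lemma reflect_sum_deriv_neg_lt (G D : R -> R) (L : list R) x r : 0 < r ->
  (forall s, x - r <= s <= x + r -> continuity_pt G s) ->
  (forall t, x - r < t < x + r -> ~ In t L -> derivable_pt_lim G t (D t)) ->
  (forall s, 0 < s < r -> ~ In (x + s) L -> ~ In (x - s) L -> D (x + s) + D (x - s) < 0) ->
  G (x + r) < G (x - r).
Proof.
  intros Hr Hc Hd Hneg.
  set (L' := map (fun q => q - x) L ++ map (fun q => x - q) L).
  assert (Hplus : forall s, derivable_pt_lim (fun s => x + s) s 1).
  { intros s. replace 1 with (0 + 1) by ring.
    apply (derivable_pt_lim_plus (fct_cte x) id);
      [apply derivable_pt_lim_const | apply derivable_pt_lim_id]. }
  assert (Hminus : forall s, derivable_pt_lim (fun s => x - s) s (-1)).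
  { intros s. replace (-1) with (0 - 1) by ring.
    apply (derivable_pt_lim_minus (fct_cte x) id);
      [apply derivable_pt_lim_const | apply derivable_pt_lim_id]. }
  enough (Hlt : G (x + r) - G (x - r) < G (x + 0) - G (x - 0))
    by (replace (x + 0) with (x - 0) in Hlt by ring; lra).
  apply (deriv_neg_off_finite_lt (fun s => G (x + s) - G (x - s))
           (fun s => D (x + s) + D (x - s)) L');
    [exact Hr | |].
  - intros s Hs.
    apply (continuity_pt_minus (fun s => G (x + s)) (fun s => G (x - s)));
      [apply (continuity_pt_comp (fun s => x + s) G)
      | apply (continuity_pt_comp (fun s => x - s) G)];
      try (apply derivable_continuous_pt; eexists; [apply Hplus || apply Hminus]);
      apply Hc; lra.
  - intros s Hs Hn.
    assert (Hn1 : ~ In (x + s) L).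
    { intros Hin. apply Hn, in_or_app. left.
      apply in_map_iff. exists (x + s); split; [ring | exact Hin]. }
    assert (Hn2 : ~ In (x - s) L).
    { intros Hin. apply Hn, in_or_app. right.
      apply in_map_iff. exists (x - s); split; [ring | exact Hin]. }
    split; [|exact (Hneg s Hs Hn1 Hn2)].
    replace (D (x + s) + D (x - s)) with (D (x + s) * 1 - D (x - s) * (-1)) by ring.
    apply (derivable_pt_lim_minus (fun s => G (x + s)) (fun s => G (x - s)));
      [apply (derivable_pt_lim_comp (fun s => x + s) G)
      | apply (derivable_pt_lim_comp (fun s => x - s) G)];
      try apply Hplus; try apply Hminus; apply Hd; auto; lra.
Qed.

Section IncrementOfAntiderivative.

Variables (f fp : R -> R) (a h x1 : R) (L : list R) (P : R -> R).
Hypothesis f_concave : concave_on01 f.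
Hypothesis f_nonneg : forall t, 0 <= t <= 1 -> 0 <= f t.
Hypothesis a_in01 : 0 <= a <= 1.
Hypothesis a_max : forall t, 0 <= t <= 1 -> f t <= f a.
Hypothesis a_first : forall t, 0 <= t <= 1 -> f t = f a -> a <= t.
Hypothesis h_pos : 0 < h.
Hypothesis x1_range : a / 2 <= x1 <= a.
Hypothesis f_derivable : forall t, 0 < t < a -> ~ In t L -> derivable_pt_lim f t (fp t).
Hypothesis P_continuous : forall x, continuity_pt P x.
Hypothesis P_derivable :
  forall t, 0 < t < a -> ~ In t L -> derivable_pt_lim P t (integrand f fp h x1 t).

Lemma antiderivative_lt_left : 0 < 2 * x1 - a -> P (2 * x1 - a) < P 0.
Proof.
  intros Hpos. apply (deriv_neg_off_finite_lt P (integrand f fp h x1) L);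
    [exact Hpos | intros; apply P_continuous |].
  intros t Ht Hn. split; [apply P_derivable; [lra | exact Hn]|].
  apply integrand_neg; [lra|].
  apply (first_maximiser_deriv_pos f a f_concave a_in01 a_max a_first (fp t) t);
    [apply f_derivable; [lra | exact Hn] | lra].
Qed.

Lemma antiderivative_lt_symmetric : x1 < a -> P a < P (2 * x1 - a).
Proof.
  intros Hlt. replace a with (x1 + (a - x1)) at 1 by ring.
  replace (2 * x1 - a) with (x1 - (a - x1)) by ring.
  apply (reflect_sum_deriv_neg_lt P (integrand f fp h x1) L x1 (a - x1));
    [lra | intros; apply P_continuous | |].
  - intros t Ht Hn. apply P_derivable; [lra | exact Hn].
  - intros s Hs Hn1 Hn2.
    destruct (first_maximiser_reflect f a f_concave a_in01 a_max a_first
                (fp (x1 - s)) (fp (x1 + s)) x1 s) as [Hfp Hf];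
      try (apply f_derivable; [lra | assumption]); try lra.
    apply integrand_reflect_sum_neg; [exact h_pos | lra | exact Hfp |].
    split; [apply f_nonneg; lra | exact Hf].
Qed.

Lemma antiderivative_increment_neg : 0 < a -> P a - P 0 < 0.
Proof.
  intros Ha. destruct (Rlt_dec x1 a) as [Hlt|Hge].
  - assert (P (2 * x1 - a) <= P 0).
    { destruct (Rlt_dec 0 (2 * x1 - a)) as [Hpos|Hzero];
        [left; exact (antiderivative_lt_left Hpos) | right; f_equal; lra]. }
    pose proof (antiderivative_lt_symmetric Hlt). lra.
  - assert (P a = P (2 * x1 - a)) by (f_equal; lra).
    pose proof (antiderivative_lt_left ltac:(lra)). lra.
Qed.

End IncrementOfAntiderivative.

Theorem lemma4p7 (f fp : R -> R) (a h : R)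
  (Hpw : piecewise_C1_01 f fp)
  (Hconc : concave_on01 f)
  (Hnn : forall t, 0 <= t <= 1 -> 0 <= f t)
  (Ha01 : 0 <= a <= 1)
  (Hamax : forall t, 0 <= t <= 1 -> f t <= f a)
  (Hamin : forall t, 0 <= t <= 1 -> f t = f a -> a <= t)
  (Hapos : 0 < a)
  (Hh : 0 < h) :
  forall x1, a / 2 <= x1 <= a ->
    exists pr : Riemann_integrable (integrand f fp h x1) 0 a,
      RiemannInt pr < 0.
Proof.
  intros x1 Hx1.
  destruct (piecewise_C1_01_integrand f fp h x1 Hh Hpw)
    as (n & p & Hp0 & Hpn & Hp_incr & Hpwc & Hder).
  set (phi := integrand f fp h x1) in *.
  pose proof (piecewise_continuous_integrable n p phi Hpwc Hp_incr) as pr01.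
  rewrite Hp0, Hpn in pr01.
  exists (RiemannInt_P22 pr01 Ha01).
  assert (Ha : 0 <= a) by lra.
  rewrite (Prim_RiemannInt phi a Ha).
  apply (antiderivative_increment_neg f fp a h x1 (partition_points n p));
    try assumption.
  - intros t Ht Hn. apply Hder; [lra | exact Hn].
  - destruct (piecewise_continuous_bounded n p phi Hpwc Hp_incr) as [M HM].
    apply (Prim_continuity_pt phi a Ha _ M). intros t Ht. apply HM. rewrite Hp0, Hpn. lra.
  - intros t Ht Hn. apply Prim_derivable; [exact Ht|].
    apply (piecewise_continuous_continuity_pt n p phi Hpwc); [rewrite Hp0, Hpn; lra | exact Hn].
Qed.
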